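(* Let $U\subset\mathbb{R}^u\times\mathbb{R}^s$ be a convex neighborhood of zero and let $f:U\to\mathbb{R}^u\times\mathbb{R}^s$ be a $C^1$ map with $f(0)=0$. Suppose that for $M>0$, $m\left(\left[\frac{\partial f_{\mathrm x}}{\partial\mathrm x}(U)\right]\right)-\frac1M\sup_{z\in U}\left\|\frac{\partial f_{\mathrm x}}{\partial\mathrm y}(z)\right\|\ge\xi$, $\sup_{z\in U}\left\{\left\|\frac{\partial f_{\mathrm y}}{\partial\mathrm y}(z)\right\|+M\left\|\frac{\partial f_{\mathrm y}}{\partial\mathrm x}(z)\right\|\right\}\le\mu$, and $\xi/\mu>1$. Let $J_s(0,M)=\{(\mathrm x,\mathrm y):\|\mathrm x\|\le M\|\mathrm y\|\}$ and $J^c_s(0,M)=(\mathbb{R}^u\times\mathbb{R}^s)\setminus J_s(0,M)$. Then $f\left(\overline{J^c_s(0,M)}\cap U\right)\subset J^c_s(0,M)\cup\{0\}$.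
   Context: Points of $\mathbb{R}^u\times\mathbb{R}^s$ are written $(\mathrm x,\mathrm y)$, $f=(f_{\mathrm x},f_{\mathrm y})$, norms Euclidean. For a linear map $A$, $m(A)=\max\{c:\|Av\|\ge c\|v\|\ \forall v\}$; for a set $\mathbf A$ of matrices, $m(\mathbf A)=\inf_{A\in\mathbf A}m(A)$. $[\partial f_{\mathrm x}/\partial\mathrm x(U)]$ is the set of matrices whose $(i,j)$ entry lies in $[\inf_{U}\partial f_{\mathrm x,i}/\partial\mathrm x_j,\sup_U\partial f_{\mathrm x,i}/\partial\mathrm x_j]$. $\overline{A}$ denotes closure. *)

From HB Require Import structures.
From mathcomp Require Import all_boot all_order all_algebra.
From mathcomp Require Import all_classical all_reals all_analysis.
Set Implicit Arguments. Unset Strict Implicit. Unset Printing Implicit Defensive.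
Import Order.TTheory GRing.Theory Num.Theory.
Import numFieldNormedType.Exports.
Local Open Scope classical_set_scope.
Local Open Scope ring_scope.

Section Defs.
Variable R : realType.

Definition enorm n (v : 'cV[R]_n) : R := Num.sqrt (\sum_i v i 0 ^+ 2).

Definition opnorm p q (A : 'M[R]_(p, q)) : R :=
  sup [set enorm (A *m v) | v in [set v : 'cV[R]_q | enorm v <= 1]].

(* m(A) = max { c : ||A v|| >= c ||v|| for all v } (extended real; +oo in
   the degenerate case of a zero-dimensional domain) *)
Definition m_mx p q (A : 'M[R]_(p, q)) : \bar R :=
  ereal_sup [set c%:E | c in [set c : R | forall v : 'cV[R]_q,
                                          c * enorm v <= enorm (A *m v)]].

Definition m_set p q (S : set 'M[R]_(p, q)) : \bar R :=
  ereal_inf [set m_mx A | A in S].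

Definition interval_hull T p q (D : T -> 'M[R]_(p, q)) (U : set T)
  : set 'M[R]_(p, q) :=
  [set A | forall i j,
     (ereal_inf [set (D z i j)%:E | z in U] <= (A i j)%:E)%E /\
     ((A i j)%:E <= ereal_sup [set (D z i j)%:E | z in U])%E].

Definition convex_set_ (V : lmodType R) (U : set V) : Prop :=
  forall a b, U a -> U b -> forall t : R, 0 <= t <= 1 ->
    U (t *: a + (1 - t) *: b).

End Defs.

Section Jac.
Variables (R : realType) (u s : nat).
Local Notation V := ('cV[R]_u * 'cV[R]_s)%type.

Definition Dxx (f : V -> V) (z : V) : 'M[R]_(u, u) :=
  \matrix_(i, j) ('d f z (delta_mx j 0, 0)).1 i 0.
Definition Dxy (f : V -> V) (z : V) : 'M[R]_(u, s) :=
  \matrix_(i, j) ('d f z (0, delta_mx j 0)).1 i 0.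
Definition Dyx (f : V -> V) (z : V) : 'M[R]_(s, u) :=
  \matrix_(i, j) ('d f z (delta_mx j 0, 0)).2 i 0.
Definition Dyy (f : V -> V) (z : V) : 'M[R]_(s, s) :=
  \matrix_(i, j) ('d f z (0, delta_mx j 0)).2 i 0.

Definition C1_on (f : V -> V) (U : set V) : Prop :=
  (forall z, U z -> differentiable f z) /\
  (forall v z, U z -> {for z, continuous (fun w => 'd f w v)}).

Definition Js (M : R) : set V := [set z | enorm z.1 <= M * enorm z.2].
End Jac.

From HB Require Import structures.
From mathcomp Require Import all_boot all_order all_algebra.
From mathcomp Require Import all_classical all_reals all_analysis.
From mathcomp Require Import ring lra.
Set Implicit Arguments. Unset Strict Implicit. Unset Printing Implicit Defensive.
Import Order.TTheory GRing.Theory Num.Theory.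
Import numFieldNormedType.Exports.
Local Open Scope classical_set_scope.
Local Open Scope ring_scope.

(* Let z = (x, y) lie in the closed cone M ||y|| <= ||x|| with x != 0, and write
   f z = (p, q).  Since f 0 = 0 and U is convex, integrating the derivative along
   the segment [0, z] gives q = int_0^1 (Dyx x + Dyy y) and p = A x + b, where A is
   the entrywise average of Dxx over the segment, so A lies in the interval hull
   [Dxx(U)], and b is the average of Dxy y, so ||b|| <= s ||y|| <= (s / M) ||x||
   with s = sup ||Dxy||.  Hence M ||q|| <= mu ||x||, while
   ||p|| >= m(A) ||x|| - ||b|| >= xi ||x||; as mu < xi, f z is outside J_s(0, M). *)

Section Euclidean.
Variable R : realType.

Definition dot n (a b : 'cV[R]_n) : R := \sum_i a i 0 * b i 0.

Lemma dotC n (a b : 'cV[R]_n) : dot a b = dot b a.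
Proof. by apply: eq_bigr => i _; rewrite mulrC. Qed.

Lemma dotDr n (a b c : 'cV[R]_n) : dot a (b + c) = dot a b + dot a c.
Proof. by rewrite /dot -big_split; apply: eq_bigr => i _; rewrite !mxE mulrDr. Qed.

Lemma dotZr n (a b : 'cV[R]_n) k : dot a (k *: b) = k * dot a b.
Proof. by rewrite /dot mulr_sumr; apply: eq_bigr => i _; rewrite !mxE mulrCA. Qed.

Lemma dotNr n (a b : 'cV[R]_n) : dot a (- b) = - dot a b.
Proof. by rewrite -scaleN1r dotZr mulN1r. Qed.

Lemma dotDl n (a b c : 'cV[R]_n) : dot (b + c) a = dot b a + dot c a.
Proof. by rewrite dotC dotDr !(dotC a). Qed.

Lemma dotZl n (a b : 'cV[R]_n) k : dot (k *: b) a = k * dot b a.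
Proof. by rewrite dotC dotZr dotC. Qed.

Lemma dotNl n (a b : 'cV[R]_n) : dot (- b) a = - dot b a.
Proof. by rewrite dotC dotNr dotC. Qed.

Lemma dot0r n (a : 'cV[R]_n) : dot a 0 = 0.
Proof. by rewrite /dot big1 // => i _; rewrite mxE mulr0. Qed.

Lemma dot_ge0 n (a : 'cV[R]_n) : 0 <= dot a a.
Proof. by apply: sumr_ge0 => i _; rewrite -expr2 sqr_ge0. Qed.

Lemma dot_eq0 n (a : 'cV[R]_n) : dot a a = 0 -> a = 0.
Proof.
move=> /eqP; rewrite psumr_eq0; last by move=> i _; rewrite -expr2 sqr_ge0.
move=> /allP a0; apply/matrixP => i j; rewrite (ord1 j) mxE.
have /a0 : i \in index_enum 'I_n by rewrite mem_index_enum.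
by rewrite /= -expr2 sqrf_eq0 => /eqP.
Qed.

Lemma dot_sqr_le n (a b : 'cV[R]_n) : dot a b ^+ 2 <= dot a a * dot b b.
Proof.
have quad t : 0 <= dot a a - 2 * t * dot a b + t ^+ 2 * dot b b.
  have := dot_ge0 (a - t *: b).
  rewrite dotDl !dotDr !dotNr !dotNl !dotZr !dotZl (dotC b a).
  by move=> /le_trans; apply; rewrite le_eqVlt; apply/orP; left; apply/eqP; ring.
have [bb0|bbn0] := eqVneq (dot b b) 0.
  by rewrite bb0 (dot_eq0 bb0) dot0r mulr0 expr0n.
have bb_gt0 : 0 < dot b b by rewrite lt_neqAle eq_sym bbn0 dot_ge0.
have := quad (dot a b / dot b b).
have -> : dot a a - 2 * (dot a b / dot b b) * dot a b
          + (dot a b / dot b b) ^+ 2 * dot b b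
        = (dot a a * dot b b - dot a b ^+ 2) / dot b b.
  by field; rewrite bbn0.
by rewrite pmulr_lge0 ?invr_gt0 // subr_ge0.
Qed.

Lemma enorm_ge0 n (a : 'cV[R]_n) : 0 <= enorm a.
Proof. exact: sqrtr_ge0. Qed.

Lemma enormE n (a : 'cV[R]_n) : enorm a = Num.sqrt (dot a a).
Proof. by rewrite /enorm; congr Num.sqrt; apply: eq_bigr => i _; rewrite expr2. Qed.

Lemma enorm_sqr n (a : 'cV[R]_n) : enorm a ^+ 2 = dot a a.
Proof. by rewrite enormE sqr_sqrtr // dot_ge0. Qed.

Lemma enorm0 n : enorm (0 : 'cV[R]_n) = 0.
Proof. by rewrite enormE dot0r sqrtr0. Qed.

Lemma enorm_eq0 n (a : 'cV[R]_n) : enorm a = 0 -> a = 0.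
Proof. by move=> a0; apply: dot_eq0; rewrite -enorm_sqr a0 expr0n. Qed.

Lemma enorm_gt0 n (a : 'cV[R]_n) : a != 0 -> 0 < enorm a.
Proof.
move=> an0; rewrite lt_neqAle enorm_ge0 andbT eq_sym.
by apply: contra_neq an0; exact: enorm_eq0.
Qed.

Lemma dot_le_enorm n (a b : 'cV[R]_n) : dot a b <= enorm a * enorm b.
Proof.
apply: le_trans (ler_norm _) _.
rewrite -sqrtr_sqr !enormE -sqrtrM ?dot_ge0 // ler_sqrt ?mulr_ge0 ?dot_ge0 //.
exact: dot_sqr_le.
Qed.

Lemma enormD_le n (a b : 'cV[R]_n) : enorm (a + b) <= enorm a + enorm b.
Proof.
rewrite -[enorm a + _]ger0_norm ?addr_ge0 ?enorm_ge0 // -sqrtr_sqr.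
rewrite enormE ler_sqrt ?sqr_ge0 // sqrrD !enorm_sqr dotDl !dotDr (dotC b a).
by have := dot_le_enorm a b; rewrite mulr2n; lra.
Qed.

Lemma enormZ n (a : 'cV[R]_n) k : enorm (k *: a) = `|k| * enorm a.
Proof. by rewrite !enormE dotZl dotZr mulrA -expr2 sqrtrM ?sqr_ge0 // sqrtr_sqr. Qed.

Lemma enormN n (a : 'cV[R]_n) : enorm (- a) = enorm a.
Proof. by rewrite -scaleN1r enormZ normrN normr1 mul1r. Qed.

Lemma opnorm_has_ubound p q (A : 'M[R]_(p, q)) :
  has_ubound [set enorm (A *m v) | v in [set v : 'cV[R]_q | enorm v <= 1]].
Proof.
exists (Num.sqrt (\sum_i dot (\col_j A i j) (\col_j A i j))).
move=> _ [v /= v_le1 <-]; rewrite enormE ler_sqrt; last first.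
  by apply: sumr_ge0 => i _; exact: dot_ge0.
apply: ler_sum => i _.
have -> : (A *m v) i 0 = dot (\col_j A i j) v.
  by rewrite mxE; apply: eq_bigr => j _; rewrite mxE.
rewrite -expr2; apply: le_trans (dot_sqr_le _ _) _.
apply: ler_piMr; first exact: dot_ge0.
by rewrite -enorm_sqr expr_le1 ?enorm_ge0.
Qed.

Lemma opnorm_ge0 p q (A : 'M[R]_(p, q)) : 0 <= opnorm A.
Proof.
apply: (ub_le_sup (opnorm_has_ubound A)); exists 0 => /=.
  by rewrite enorm0 ler01.
by rewrite mulmx0 enorm0.
Qed.

Lemma enorm_mulmx_le p q (A : 'M[R]_(p, q)) v :
  enorm (A *m v) <= opnorm A * enorm v.
Proof.
have [->|vn0] := eqVneq v 0; first by rewrite mulmx0 !enorm0 mulr0.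
have v_gt0 := enorm_gt0 vn0.
have : enorm (A *m ((enorm v)^-1 *: v)) <= opnorm A.
  apply: (ub_le_sup (opnorm_has_ubound A)); exists ((enorm v)^-1 *: v) => //=.
  by rewrite enormZ ger0_norm ?invr_ge0 ?enorm_ge0 // mulVf // gt_eqF.
rewrite -scalemxAr enormZ ger0_norm ?invr_ge0 ?enorm_ge0 //.
by rewrite mulrC ler_pdivrMr.
Qed.

Lemma m_mx_lbound p q (A : 'M[R]_(p, q)) a v :
  (a%:E <= m_mx A)%E -> a * enorm v <= enorm (A *m v).
Proof.
move=> aA; have [->|vn0] := eqVneq v 0.
  by rewrite enorm0 mulr0 enorm_ge0.
have v_gt0 := enorm_gt0 vn0.
rewrite -ler_pdivlMr // -lee_fin; apply: le_trans aA _.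
apply: ge_ereal_sup => _ [c cA <-].
by rewrite lee_fin ler_pdivlMr.
Qed.

End Euclidean.

Section Continuity.
Variables (R : realType) (u s : nat).
Local Notation V := ('cV[R]_u * 'cV[R]_s)%type.

Lemma continuous_sumr (T : topologicalType) n (F : 'I_n -> T -> R) (x : T) :
  (forall i, {for x, continuous (F i)}) ->
  {for x, continuous (fun t => \sum_i F i t)}.
Proof.
move=> Fx; apply: cvg_big => [[a b]|i _]; last exact: Fx.
by apply: cvgD; [exact: cvg_fst | exact: cvg_snd].
Qed.

Lemma enorm_continuous n : continuous (@enorm R n).
Proof.
move=> v; apply: (@continuous_comp _ _ _ (fun w : 'cV[R]_n => \sum_i w i 0 ^+ 2)
   Num.sqrt); last exact: sqrt_continuous.
apply: continuous_sumr => i.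
under [X in {for v, continuous X}]eq_fun do rewrite expr2.
by apply: continuousM; exact: coord_continuous.
Qed.

Lemma fst_coord_is_linear i : linear (fun v : V => v.1 i 0).
Proof. by move=> a v w; rewrite /= !mxE. Qed.

Lemma snd_coord_is_linear i : linear (fun v : V => v.2 i 0).
Proof. by move=> a v w; rewrite /= !mxE. Qed.

Definition fst_coord i : {linear V -> R} :=
  HB.pack (fun v : V => v.1 i 0) (GRing.isLinear.Build _ _ _ _ _ (fst_coord_is_linear i)).

Definition snd_coord i : {linear V -> R} :=
  HB.pack (fun v : V => v.2 i 0) (GRing.isLinear.Build _ _ _ _ _ (snd_coord_is_linear i)).

Lemma fst_coord_continuous i : continuous (fst_coord i).
Proof.
move=> z; apply: (@continuous_comp _ _ _ fst (fun m : 'cV[R]_u => m i 0)).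
  exact: cvg_fst.
exact: coord_continuous.
Qed.

Lemma snd_coord_continuous i : continuous (snd_coord i).
Proof.
move=> z; apply: (@continuous_comp _ _ _ snd (fun m : 'cV[R]_s => m i 0)).
  exact: cvg_snd.
exact: coord_continuous.
Qed.

End Continuity.

Arguments fst_coord {R u s} i.
Arguments snd_coord {R u s} i.
Arguments fst_coord_continuous {R u s} i.
Arguments snd_coord_continuous {R u s} i.

Section Jacobian.
Variables (R : realType) (u s : nat).
Local Notation V := ('cV[R]_u * 'cV[R]_s)%type.

Lemma is_derive_segment (f : V -> V) (L : {linear V -> R}) (z : V) t :
  continuous L -> differentiable f (t *: z) ->
  is_derive t 1 (fun r => L (f (r *: z))) (L ('d f (t *: z) z)).
Proof.
move=> cL df.
have dline : differentiable (fun r : R => r *: z) t by exact: ex_diff.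
have dL w : differentiable L w by exact: linear_differentiable.
have dfline : differentiable (f \o (fun r : R => r *: z)) t.
  exact: differentiable_comp.
have dh : differentiable (L \o (f \o (fun r : R => r *: z))) t.
  exact: differentiable_comp.
have -> : L ('d f (t *: z) z) = 'D_1 (L \o (f \o (fun r : R => r *: z))) t.
  rewrite (deriveE _ dh) (diff_comp dfline (dL _)) /= (diff_comp dline df) /=.
  by rewrite diff_lin // (@diff_val _ _ _ _ _ _ _ (is_diff_scalel t z)) /= scale1r.
exact/derivableP/diff_derivable.
Qed.

Lemma colE_delta n (x : 'cV[R]_n) : x = \sum_j x j 0 *: delta_mx j 0.
Proof. by rewrite {1}[x]matrix_sum_delta; apply: eq_bigr => j _; rewrite big_ord1. Qed.

Lemma fst_sum n (F : 'I_n -> V) : (\sum_i F i).1 = \sum_i (F i).1.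
Proof. exact: (big_morph fst (fun _ _ => erefl) erefl). Qed.

Lemma snd_sum n (F : 'I_n -> V) : (\sum_i F i).2 = \sum_i (F i).2.
Proof. exact: (big_morph snd (fun _ _ => erefl) erefl). Qed.

Lemma linear_fst_delta (D : {linear V -> V}) (x : 'cV[R]_u) :
  D (x, 0) = \sum_j x j 0 *: D (delta_mx j 0, 0).
Proof.
have -> : ((x, 0) : V) = \sum_j x j 0 *: ((delta_mx j 0, 0) : V).
  have E1 : (\sum_j x j 0 *: ((delta_mx j 0, 0) : V)).1 = x.
    by rewrite fst_sum [RHS]colE_delta.
  have E2 : (\sum_j x j 0 *: ((delta_mx j 0, 0) : V)).2 = 0.
    by rewrite snd_sum big1 // => j _ /=; rewrite scaler0.
  by case: (\sum_j _) E1 E2 => a b /= -> ->.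
by rewrite linear_sum; apply: eq_bigr => j _; rewrite linearZ.
Qed.

Lemma linear_snd_delta (D : {linear V -> V}) (y : 'cV[R]_s) :
  D (0, y) = \sum_j y j 0 *: D (0, delta_mx j 0).
Proof.
have -> : ((0, y) : V) = \sum_j y j 0 *: ((0, delta_mx j 0) : V).
  have E1 : (\sum_j y j 0 *: ((0, delta_mx j 0) : V)).2 = y.
    by rewrite snd_sum [RHS]colE_delta.
  have E2 : (\sum_j y j 0 *: ((0, delta_mx j 0) : V)).1 = 0.
    by rewrite fst_sum big1 // => j _ /=; rewrite scaler0.
  by case: (\sum_j _) E1 E2 => a b /= -> ->.
by rewrite linear_sum; apply: eq_bigr => j _; rewrite linearZ.
Qed.

Lemma diff_blocksE (f : V -> V) (w z : V) :
  ('d f w z).1 = Dxx f w *m z.1 + Dxy f w *m z.2 /\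
  ('d f w z).2 = Dyx f w *m z.1 + Dyy f w *m z.2.
Proof.
have -> : z = ((z.1, 0) : V) + (0, z.2).
  by case: z => a b /=; change ((a, b) = (a + 0, 0 + b)); rewrite addr0 add0r.
rewrite linearD linear_fst_delta linear_snd_delta /= addr0 add0r.
by split; apply/matrixP => i k; rewrite (ord1 k) !mxE;
  congr (_ + _); rewrite ?fst_sum ?snd_sum summxE; apply: eq_bigr => j _;
  rewrite !mxE mulrC.
Qed.

End Jacobian.

Section Integral01.
Variable R : realType.

Definition cont01 (g : R -> R) := forall t, 0 <= t <= 1 -> {for t, continuous g}.

Lemma cont01_within g : cont01 g -> {within `[0, 1], continuous g}.
Proof. by move=> cg; apply: continuous_subspace_itv => t; rewrite in_itv /= => /cg. Qed.

Lemma cont01_integrable g : cont01 g -> lebesgue_measure.-integrable `[0, 1] (EFin \o g).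
Proof.
move=> cg; apply: continuous_compact_integrable; first exact: segment_compact.
exact: cont01_within.
Qed.

Lemma cont01_cst (c : R) : cont01 (fun=> c).
Proof. by move=> t _; exact: cst_continuous. Qed.

Lemma cont01_sum n (g : 'I_n -> R -> R) :
  (forall i, cont01 (g i)) -> cont01 (fun t => \sum_i g i t).
Proof. by move=> cg t t01; apply: continuous_sumr => i; exact: cg. Qed.

Lemma cont01_mull (c : R) g : cont01 g -> cont01 (fun t => c * g t).
Proof.
move=> cg t t01; apply: (@continuousM _ _ (cst c) g); last exact: cg.
exact: cst_continuous.
Qed.

Lemma Rintegral01_cst (c : R) : \int[lebesgue_measure]_(t in `[0, 1]) c = c.
Proof.
have mu01 : fine (@lebesgue_measure R `[0, 1]%classic) = 1.
  by rewrite lebesgue_measure_itv /= lte_fin ltr01 /= subr0.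
by rewrite Rintegral_cst // mu01 mulr1.
Qed.

Lemma Rintegral01_sum n (c : 'I_n -> R) (g : 'I_n -> R -> R) :
  (forall i, cont01 (g i)) ->
  \int[lebesgue_measure]_(t in `[0, 1]) (\sum_i c i * g i t)
  = \sum_i c i * \int[lebesgue_measure]_(t in `[0, 1]) g i t.
Proof.
elim: n c g => [|n IH] c g cg.
  rewrite (_ : (fun t => _) = fun=> 0); last by apply/funext => t; rewrite big_ord0.
  by rewrite Rintegral01_cst big_ord0.
rewrite (_ : (fun t => _) = fun t =>
  \sum_(i < n) c (widen_ord (leqnSn n) i) * g (widen_ord (leqnSn n) i) t
  + c ord_max * g ord_max t); last by apply/funext => t; rewrite big_ord_recr.
rewrite RintegralD //; last first.
- exact/cont01_integrable/cont01_mull.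
- by apply/cont01_integrable/cont01_sum => i; exact: cont01_mull.
by rewrite big_ord_recr /= IH // RintegralZl //; exact: cont01_integrable.
Qed.

Lemma Rintegral01_ubound g K : cont01 g -> (forall t, 0 <= t <= 1 -> g t <= K) ->
  \int[lebesgue_measure]_(t in `[0, 1]) g t <= K.
Proof.
move=> cg gK; rewrite -[leRHS]Rintegral01_cst.
apply: le_Rintegral => //; apply: cont01_integrable => //; exact: cont01_cst.
Qed.

Lemma Rintegral01_lbound g K : cont01 g -> (forall t, 0 <= t <= 1 -> K <= g t) ->
  K <= \int[lebesgue_measure]_(t in `[0, 1]) g t.
Proof.
move=> cg Kg; rewrite -[leLHS]Rintegral01_cst.
apply: le_Rintegral => //; apply: cont01_integrable => //; exact: cont01_cst.
Qed.

Lemma Rintegral01_ubound_ereal (E : \bar R) g : cont01 g ->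
  (forall t, 0 <= t <= 1 -> ((g t)%:E <= E)%E) ->
  ((\int[lebesgue_measure]_(t in `[0, 1]) g t)%:E <= E)%E.
Proof.
move=> cg gE; case: E gE => [e| |] gE.
- by rewrite lee_fin; apply: Rintegral01_ubound => // t /gE; rewrite lee_fin.
- exact: leey.
- by have := gE 0; rewrite lexx ler01 leeNy_eq => /(_ isT).
Qed.

Lemma Rintegral01_lbound_ereal (E : \bar R) g : cont01 g ->
  (forall t, 0 <= t <= 1 -> (E <= (g t)%:E)%E) ->
  (E <= (\int[lebesgue_measure]_(t in `[0, 1]) g t)%:E)%E.
Proof.
move=> cg Eg; case: E Eg => [e| |] Eg.
- by rewrite lee_fin; apply: Rintegral01_lbound => // t /Eg; rewrite lee_fin.
- by have := Eg 0; rewrite lexx ler01 leye_eq => /(_ isT).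
- exact: leNye.
Qed.

Lemma Rintegral01_FTC (F g : R -> R) :
  (forall t : R, 0 <= t <= 1 -> is_derive t 1 F (g t)) -> cont01 g ->
  \int[lebesgue_measure]_(t in `[0, 1]) g t = F 1 - F 0.
Proof.
move=> dF cg.
have Fx (t : R) : 0 <= t <= 1 -> {for t, continuous F}.
  move=> /dF dFt; apply: differentiable_continuous.
  by apply/derivable1_diffP; exact: ex_derive.
have dF_oo (t : R) : 0 < t < 1 -> is_derive t 1 F (g t).
  by move=> /andP[t0 t1]; apply: dF; rewrite !ltW.
rewrite /Rintegral (@continuous_FTC2 _ g F _ _ ltr01 (cont01_within cg)) //.
- split.
  + by move=> t; rewrite in_itv /= => /dF_oo dFt; exact: ex_derive.
  + by apply: cvg_at_right_filter; apply: Fx; rewrite lexx ler01.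
  + by apply: cvg_at_left_filter; apply: Fx; rewrite lexx ler01.
- by move=> t; rewrite in_itv /= => /dF_oo dFt; rewrite derive1E derive_val.
Qed.

Lemma enorm_col_Rintegral01_le n (g : 'I_n -> R -> R) K :
  (forall i, cont01 (g i)) ->
  (forall t, 0 <= t <= 1 -> enorm (\col_i g i t) <= K) ->
  enorm (\col_i \int[lebesgue_measure]_(t in `[0, 1]) g i t) <= K.
Proof.
move=> cg gK; set w := \col_i _.
have K_ge0 : 0 <= K by apply: le_trans (gK 0 _); rewrite ?enorm_ge0 ?lexx ?ler01.
have : enorm w ^+ 2 <= enorm w * K.
  rewrite enorm_sqr.
  have -> : dot w w = \int[lebesgue_measure]_(t in `[0, 1]) \sum_i w i 0 * g i t.
    by rewrite Rintegral01_sum //; apply: eq_bigr => i _; rewrite [X in _ * X]mxE.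
  apply: Rintegral01_ubound; first by apply: cont01_sum => i; exact: cont01_mull.
  move=> t t01; have -> : \sum_i w i 0 * g i t = dot w (\col_i g i t).
    by apply: eq_bigr => i _; rewrite mxE.
  apply: le_trans (dot_le_enorm _ _) _.
  by rewrite ler_wpM2l ?enorm_ge0 ?gK.
by have := enorm_ge0 w; nra.
Qed.

End Integral01.

Lemma lt_of_ratio_gt1 (R : realFieldType) (a b : R) : 0 <= b -> 1 < a / b -> b < a.
Proof.
move=> b_ge0; have [->|bn0] := eqVneq b 0; first by rewrite invr0 mulr0 ltr10.
by rewrite ltr_pdivlMr ?mul1r // lt_neqAle eq_sym bn0.
Qed.

Lemma lee_sub_pmul_fin (R : realFieldType) (m S : \bar R) (k xi : R) :
  0 < k -> (-oo < S)%E -> (xi%:E <= m - k%:E * S)%E ->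
  exists2 s0 : R, S = s0%:E & ((xi + k * s0)%:E <= m)%E.
Proof.
move=> k_gt0; case: S => [s0| |] //= _.
  move=> h; exists s0 => //; case: m h => [m| |] /=.
  - by rewrite -EFinD !lee_fin => h; lra.
  - by move=> _; rewrite leey.
  - by rewrite addNye leeNy_eq.
by rewrite mulry gtr0_sg // mul1e addeNy leeNy_eq.
Qed.

Lemma convex_segment0 (R : realType) (V : lmodType R) (U : set V) (z : V) :
  convex_set_ U -> U 0 -> U z -> forall t, 0 <= t <= 1 -> U (t *: z).
Proof. by move=> cU U0 Uz t t01; have := cU z 0 Uz U0 t t01; rewrite scaler0 addr0. Qed.

Section Segment.
Variables (R : realType) (u s : nat).
Local Notation V := ('cV[R]_u * 'cV[R]_s)%type.
Variables (f : V -> V) (z : V).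
Hypothesis f0 : f 0 = 0.
Hypothesis df : forall t, 0 <= t <= 1 -> differentiable f (t *: z).
Hypothesis cdf :
  forall v t, 0 <= t <= 1 -> {for t *: z, continuous (fun w => 'd f w v)}.

Lemma cont01_diff_segment (L : V -> R) v : continuous L ->
  cont01 (fun t => L ('d f (t *: z) v)).
Proof.
move=> cL t t01.
apply: (@continuous_comp _ _ _ (fun r : R => r *: z) (fun w => L ('d f w v))).
  exact: scalel_continuous.
apply: continuous_comp; [exact: cdf | exact: cL].
Qed.

Lemma linear_f_segment (L : {linear V -> R}) : continuous L ->
  L (f z) = \int[lebesgue_measure]_(t in `[0, 1]) L ('d f (t *: z) z).
Proof.
move=> cL.
have dLf (t : R) : 0 <= t <= 1 ->
    is_derive t 1 (fun r => L (f (r *: z))) (L ('d f (t *: z) z)).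
  by move=> t01; apply: is_derive_segment => //; exact: df.
rewrite (Rintegral01_FTC dLf (cont01_diff_segment cL)).
by rewrite scale1r scale0r f0 raddf0 subr0.
Qed.

Lemma fst_f_segment :
  (f z).1 = \col_i \int[lebesgue_measure]_(t in `[0, 1]) ('d f (t *: z) z).1 i 0.
Proof.
apply/matrixP => i k; rewrite (ord1 k) mxE.
exact: (linear_f_segment (fst_coord_continuous i)).
Qed.

Lemma snd_f_segment :
  (f z).2 = \col_i \int[lebesgue_measure]_(t in `[0, 1]) ('d f (t *: z) z).2 i 0.
Proof.
apply/matrixP => i k; rewrite (ord1 k) mxE.
exact: (linear_f_segment (snd_coord_continuous i)).
Qed.

Definition avg_Dxx : 'M[R]_u :=
  \matrix_(i, j) \int[lebesgue_measure]_(t in `[0, 1]) Dxx f (t *: z) i j.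

Definition avg_Dxy_y : 'cV[R]_u :=
  \col_i \int[lebesgue_measure]_(t in `[0, 1]) (Dxy f (t *: z) *m z.2) i 0.

Lemma cont01_Dxx i j : cont01 (fun t => Dxx f (t *: z) i j).
Proof.
rewrite (_ : (fun t => _) = fun t => fst_coord i ('d f (t *: z) (delta_mx j 0, 0))).
  exact: (cont01_diff_segment (fst_coord_continuous i)).
by apply/funext => t; rewrite mxE.
Qed.

Lemma cont01_Dxy_y i : cont01 (fun t => (Dxy f (t *: z) *m z.2) i 0).
Proof.
rewrite (_ : (fun t => _) = fun t => fst_coord i ('d f (t *: z) (0, z.2))).
  exact: (cont01_diff_segment (fst_coord_continuous i)).
apply/funext => t; rewrite /= (diff_blocksE f (t *: z) (0, z.2)).1 /=.
by rewrite mulmx0 add0r.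
Qed.

Lemma fst_f_segment_blocks : (f z).1 = avg_Dxx *m z.1 + avg_Dxy_y.
Proof.
apply/matrixP => i k; rewrite (ord1 k) fst_f_segment !mxE.
rewrite (_ : (fun t => _) = fun t =>
  \sum_j z.1 j 0 * Dxx f (t *: z) i j + (Dxy f (t *: z) *m z.2) i 0); last first.
  apply/funext => t; rewrite (diff_blocksE f (t *: z) z).1 mxE [X in X + _]mxE.
  by congr (_ + _); apply: eq_bigr => j _; rewrite mulrC.
rewrite RintegralD //; last 2 first.
- by apply/cont01_integrable/cont01_sum => j; exact/cont01_mull/cont01_Dxx.
- exact/cont01_integrable/cont01_Dxy_y.
rewrite Rintegral01_sum; last exact: cont01_Dxx.
by congr (_ + _); apply: eq_bigr => j _; rewrite !mxE mulrC.
Qed.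

Lemma avg_Dxx_in_hull (U : set V) :
  (forall t, 0 <= t <= 1 -> U (t *: z)) -> interval_hull (Dxx f) U avg_Dxx.
Proof.
move=> segU i j; rewrite mxE; split.
  apply: Rintegral01_lbound_ereal; first exact: cont01_Dxx.
  by move=> t t01; apply: ereal_inf_lbound; exists (t *: z) => //; exact: segU.
apply: Rintegral01_ubound_ereal; first exact: cont01_Dxx.
by move=> t t01; apply: ereal_sup_ubound; exists (t *: z) => //; exact: segU.
Qed.

Lemma enorm_avg_Dxy_y_le K :
  (forall t, 0 <= t <= 1 -> opnorm (Dxy f (t *: z)) <= K) ->
  enorm avg_Dxy_y <= K * enorm z.2.
Proof.
move=> DK; apply: enorm_col_Rintegral01_le; first exact: cont01_Dxy_y.
move=> t t01; rewrite (_ : \col_i _ = Dxy f (t *: z) *m z.2); last first.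
  by apply/matrixP => i k; rewrite (ord1 k) mxE.
by apply: le_trans (enorm_mulmx_le _ _) _; rewrite ler_wpM2r ?enorm_ge0 ?DK.
Qed.

Lemma enorm_snd_f_le K :
  (forall t, 0 <= t <= 1 ->
     opnorm (Dyx f (t *: z)) * enorm z.1 + opnorm (Dyy f (t *: z)) * enorm z.2
     <= K) ->
  enorm (f z).2 <= K.
Proof.
move=> DK; rewrite snd_f_segment; apply: enorm_col_Rintegral01_le.
  by move=> i; exact: (cont01_diff_segment (snd_coord_continuous i)).
move=> t t01; rewrite (_ : \col_i _ = ('d f (t *: z) z).2); last first.
  by apply/matrixP => i k; rewrite (ord1 k) mxE.
rewrite (diff_blocksE f (t *: z) z).2; apply: le_trans (enormD_le _ _) _.
by apply: le_trans (DK t t01); apply: lerD; exact: enorm_mulmx_le.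
Qed.

End Segment.

Section Cone.
Variables (R : realType) (u s : nat).
Local Notation V := ('cV[R]_u * 'cV[R]_s)%type.

Lemma closure_setC_Js_sub (M : R) :
  closure (~` Js M) `<=` [set w : V | M * enorm w.2 <= enorm w.1].
Proof.
have cont_gap : continuous (fun w : V => enorm w.1 - M * enorm w.2).
  rewrite (_ : (fun w : V => _) =
    (fun w : V => enorm w.1) - (fun w : V => M * enorm w.2)) //.
  move=> w; apply: continuousB.
    apply: (@continuous_comp _ _ _ fst (@enorm R u)); first exact: cvg_fst.
    exact: enorm_continuous.
  apply: (@continuousM _ _ (cst M) (fun w : V => enorm w.2)).
    exact: cst_continuous.
  apply: (@continuous_comp _ _ _ snd (@enorm R s)); first exact: cvg_snd.
  exact: enorm_continuous.
have cone_closed : closed [set w : V | M * enorm w.2 <= enorm w.1].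
  rewrite (_ : [set w : V | _] = (fun w : V => enorm w.1 - M * enorm w.2)
                                 @^-1` [set r | 0 <= r]).
    by move/continuous_closedP: cont_gap; apply; exact: closed_ge.
  by apply/seteqP; split => w /=; rewrite subr_ge0.
have cone_sub : ~` Js M `<=` [set w : V | M * enorm w.2 <= enorm w.1].
  by move=> w /= /negP; rewrite -ltNge => /ltW.
apply: subset_trans (closureS cone_sub) _.
by move/closure_id: cone_closed => <-.
Qed.

Lemma cone_fst_eq0 (M : R) (z : V) :
  0 < M -> M * enorm z.2 <= enorm z.1 -> z.1 = 0 -> z = 0.
Proof.
move=> M_gt0 z_cone x0; have y0 : z.2 = 0.
  apply: enorm_eq0; apply/eqP; rewrite eq_le enorm_ge0 andbT.
  by move: z_cone; rewrite x0 enorm0 pmulr_rle0.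
by case: z {z_cone} x0 y0 => x y /= -> ->.
Qed.

Variables (U : set V) (f : V -> V) (M xi mu s0 : R) (z : V).
Hypothesis M_gt0 : 0 < M.
Hypothesis f0 : f 0 = 0.
Hypothesis dfU : forall w, U w -> differentiable f w.
Hypothesis cdfU : forall v w, U w -> {for w, continuous (fun w => 'd f w v)}.
Hypothesis segU : forall t, 0 <= t <= 1 -> U (t *: z).
Hypothesis z_cone : M * enorm z.2 <= enorm z.1.

Let df_seg t : 0 <= t <= 1 -> differentiable f (t *: z).
Proof. by move=> /segU; exact: dfU. Qed.

Let cdf_seg v t : 0 <= t <= 1 -> {for t *: z, continuous (fun w => 'd f w v)}.
Proof. by move=> /segU; exact: cdfU. Qed.

Lemma cone_snd_contraction :
  (forall w, U w -> opnorm (Dyy f w) + M * opnorm (Dyx f w) <= mu) ->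
  M * enorm (f z).2 <= mu * enorm z.1.
Proof.
move=> Dmu; rewrite mulrC -ler_pdivlMr //.
apply: (enorm_snd_f_le f0 df_seg cdf_seg) => t t01; rewrite ler_pdivlMr //.
have := ler_wpM2r (enorm_ge0 z.1) (Dmu _ (segU t01)).
have := ler_wpM2l (opnorm_ge0 (Dyy f (t *: z))) z_cone.
nra.
Qed.

Lemma cone_fst_expansion :
  (forall w, U w -> opnorm (Dxy f w) <= s0) ->
  ((xi + M^-1 * s0)%:E <= m_set (interval_hull (Dxx f) U))%E ->
  xi * enorm z.1 <= enorm (f z).1.
Proof.
move=> Dxy_le hull_ge.
pose A := avg_Dxx f z; pose b := avg_Dxy_y f z.
have s0_ge0 : 0 <= s0.
  by apply: le_trans (Dxy_le _ (segU (t:=0) _)); rewrite ?opnorm_ge0 ?lexx ?ler01.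
have Ax_ge : (xi + M^-1 * s0) * enorm z.1 <= enorm (A *m z.1).
  apply: m_mx_lbound; apply: le_trans hull_ge _; apply: ereal_inf_lbound.
  by exists A => //; exact: (avg_Dxx_in_hull cdf_seg).
have Ax_le : enorm (A *m z.1) <= enorm (f z).1 + enorm b.
  have -> : A *m z.1 = (f z).1 - b by rewrite (fst_f_segment_blocks f0) ?addrK.
  by rewrite -(enormN b); exact: enormD_le.
have b_le : enorm b <= s0 * enorm z.2.
  by apply: (enorm_avg_Dxy_y_le cdf_seg) => t t01; exact: Dxy_le _ (segU t01).
have sy_le : s0 * enorm z.2 <= M^-1 * s0 * enorm z.1.
  rewrite (_ : s0 * enorm z.2 = M^-1 * s0 * (M * enorm z.2)); last first.
    by field; rewrite gt_eqF.
  by apply: ler_wpM2l z_cone; rewrite mulr_ge0 ?invr_ge0 // ltW.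
lra.
Qed.

End Cone.

Theorem theorem4p3 (R : realType) (u s : nat)
  (U : set ('cV[R]_u * 'cV[R]_s)) (f : 'cV[R]_u * 'cV[R]_s -> 'cV[R]_u * 'cV[R]_s)
  (M xi mu : R) :
  open U -> U 0 -> convex_set_ U ->
  C1_on f U -> f 0 = 0 ->
  0 < M ->
  (m_set (interval_hull (Dxx f) U)
     - (M^-1)%:E * ereal_sup [set (opnorm (Dxy f z))%:E | z in U] >= xi%:E)%E ->
  (ereal_sup [set (opnorm (Dyy f z) + M * opnorm (Dyx f z))%:E | z in U]
     <= mu%:E)%E ->
  1 < xi / mu ->
  f @` (closure (~` Js M) `&` U) `<=` (~` Js M) `|` [set 0].
Proof.
move=> _ U0 cU [dfU cdfU] f0 M_gt0 xi_le mu_ge ratio_gt1.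
move=> _ [z [/closure_setC_Js_sub z_cone zU] <-].
have segU := convex_segment0 cU U0 zU.
have [x0|xn0] := eqVneq z.1 0.
  by right; rewrite (cone_fst_eq0 M_gt0 z_cone x0) f0.
left; rewrite /Js /= => fz_le.
have mu_le w : U w -> opnorm (Dyy f w) + M * opnorm (Dyx f w) <= mu.
  move=> Uw; rewrite -lee_fin; apply: le_trans mu_ge.
  by apply: ereal_sup_ubound; exists w.
have mu_lt_xi : mu < xi.
  apply: lt_of_ratio_gt1 ratio_gt1; apply: le_trans (mu_le 0 U0).
  by rewrite addr_ge0 ?mulr_ge0 ?opnorm_ge0 ?ltW.
have sup_gtNy : (-oo < ereal_sup [set (opnorm (Dxy f z))%:E | z in U])%E.
  by apply: lt_le_trans (ltNyr (opnorm (Dxy f 0))) _; apply: ereal_sup_ubound; exists 0.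
have Minv_gt0 : 0 < M^-1 by rewrite invr_gt0.
have [s0 sup_eq hull_ge] := lee_sub_pmul_fin Minv_gt0 sup_gtNy xi_le.
have Dxy_le w : U w -> opnorm (Dxy f w) <= s0.
  by move=> Uw; rewrite -lee_fin -sup_eq; apply: ereal_sup_ubound; exists w.
have fst_ge := cone_fst_expansion M_gt0 f0 dfU cdfU segU z_cone Dxy_le hull_ge.
have snd_le := cone_snd_contraction M_gt0 f0 dfU cdfU segU z_cone mu_le.
suff : xi * enorm z.1 <= mu * enorm z.1.
  by rewrite ler_pM2r ?enorm_gt0 // leNgt mu_lt_xi.
lra.
Qed.
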